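(* Let $n\ge 1$, $a<b$, and let $f:[a,b]\to\mathbb{R}$ be $n$-times differentiable on $[a,b]$. Put $\mathfrak{T}_f(a)=T_{n-1}(f,b)(a)-f(a)$. If $$\left(\frac{f^{(n)}(a)(a-b)^n}{n!}+\mathfrak{T}_f(a)\right)\left(\frac{f^{(n)}(b)(a-b)^n}{n!}+\mathfrak{T}_f(a)\right)\geq 0,$$ then there exists $\eta\in(a,b]$ such that $$\frac{f(\eta)-f(a)}{\eta-a}=\sum_{i=1}^n\frac{(-1)^{i+1}}{i!}(\eta-a)^{i-1}f^{(i)}(\eta).$$
   Context: $n$-times differentiable on $[a,b]$ means $n$-times differentiable on $(a,b)$ with the corresponding one-sided derivatives existing at the endpoints. $T_m(h,x_0)(x)=\sum_{k=0}^m \frac{h^{(k)}(x_0)}{k!}(x-x_0)^k$ denotes the $m$-th Taylor polynomial of $h$ at $x_0$, evaluated at $x$. *)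

From Stdlib Require Import Reals Lra Arith.
Open Scope R_scope.

(* At an interior point this is the ordinary derivative; at x = a (resp. x = b)
   it is the right (resp. left) one-sided derivative. *)
Definition derive_within (a b : R) (g : R -> R) (x l : R) : Prop :=
  forall eps : R, 0 < eps -> exists delta : R, 0 < delta /\
    forall y : R, a <= y <= b -> 0 < Rabs (y - x) < delta ->
      Rabs ((g y - g x) / (y - x) - l) < eps.

Definition nth_derivs_on (a b : R) (n : nat) (f : R -> R) (D : nat -> R -> R) : Prop :=
  (forall x, a <= x <= b -> D 0%nat x = f x) /\
  (forall k : nat, (k < n)%nat -> forall x, a <= x <= b ->
     derive_within a b (D k) x (D (S k) x)).

Definition taylor_poly (D : nat -> R -> R) (m : nat) (x0 x : R) : R :=
  sum_f_R0 (fun k => D k x0 / INR (fact k) * (x - x0) ^ k) m.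

(* With T(x) := T_{n-1}(f,x)(a) - f(a), consider h(x) := T(x)/(x-a)^n on (a,b].
   A direct computation gives h'(x) = -n (T_n(f,x)(a) - f(a)) / (x-a)^(n+1), and
   T_n(f,x)(a) = f(a) is exactly the claimed identity at x.  By the Peano form of
   Taylor's theorem (expanding f(a) around the moving point x), h(x) tends to
   L = (-1)^(n-1) f^(n)(a)/n! as x -> a+, and the hypothesis says precisely that
   (h(b) - L) h'(b) <= 0.  A Rolle-type argument on (a,b], with the limit L in
   place of a value at a, then yields a critical point of h. *)

From Stdlib Require Import Reals Arith Lra Lia Ranalysis5.
Open Scope R_scope.

Ltac nonzero :=
  repeat split;
  first [apply not_0_INR, fact_neq_0 | apply not_0_INR; lia | apply pow_nonzero; lra | lra].

Definition punctured_interval (a b x y : R) : Prop := a <= y <= b /\ y <> x.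

Lemma derive_within_limit a b g x l :
  derive_within a b g x l <->
  limit1_in (fun y => (g y - g x) / (y - x)) (punctured_interval a b x) l x.
Proof.
  unfold derive_within, limit1_in, limit_in, punctured_interval; simpl; unfold Rdist.
  split; intros H eps Heps; destruct (H eps Heps) as [d [Hd Hlim]];
    exists d; split; try lra.
  - intros y [[Hy Hne] Hlt]. apply Hlim; auto. split; auto. apply Rabs_pos_lt. lra.
  - intros y Hy [Hpos Hlt]. apply Hlim. split; [split|]; auto.
    intros ->. rewrite Rminus_diag, Rabs_R0 in Hpos. lra.
Qed.

Lemma limit1_in_ext f g D l x0 :
  (forall y, D y -> f y = g y) -> limit1_in f D l x0 -> limit1_in g D l x0.
Proof.
  intros E H eps Heps. destruct (H eps Heps) as [d [Hd Hlim]].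
  exists d; split; auto. intros y [Dy Hy]. rewrite <- E; auto.
Qed.

Lemma limit1_in_const c D x0 : limit1_in (fun _ => c) D c x0.
Proof. exact (limit_free (fun _ => c) D x0 x0). Qed.

Lemma derive_within_ext a b f g x l l' :
  derive_within a b f x l -> (forall y, f y = g y) -> l = l' -> derive_within a b g x l'.
Proof.
  intros H E <- eps Heps. destruct (H eps Heps) as [d [Hd Hlim]].
  exists d; split; auto. intros y Hy Hyx. rewrite <- !E. auto.
Qed.

Lemma derive_within_restrict a b c d g x l :
  a <= c -> d <= b -> derive_within a b g x l -> derive_within c d g x l.
Proof.
  intros Hc Hd H eps Heps. destruct (H eps Heps) as [e [He Hlim]].
  exists e; split; auto. intros y Hy. apply Hlim. lra.
Qed.

Lemma derive_within_continuous a b g x l :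
  derive_within a b g x l -> limit1_in g (punctured_interval a b x) (g x) x.
Proof.
  intros H. apply derive_within_limit in H.
  pose proof (limit_plus _ _ _ _ _ _ (limit1_in_const (g x) _ x)
    (limit_mul _ _ _ _ _ _ H (limit_minus _ _ _ _ _ _ (lim_x _ x) (limit1_in_const x _ x))))
    as Hlim.
  replace (g x + l * (x - x)) with (g x) in Hlim by ring.
  eapply limit1_in_ext; [|exact Hlim]. intros y [_ Hy]. simpl. field. lra.
Qed.

Lemma derive_within_const a b c x : derive_within a b (fun _ => c) x 0.
Proof.
  apply derive_within_limit. eapply limit1_in_ext; [|apply limit1_in_const].
  intros y [_ Hy]. simpl. field. lra.
Qed.

Lemma derive_within_id a b x : derive_within a b (fun y => y) x 1.
Proof.
  apply derive_within_limit. eapply limit1_in_ext; [|apply limit1_in_const].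
  intros y [_ Hy]. simpl. field. lra.
Qed.

Lemma derive_within_plus a b f g x lf lg :
  derive_within a b f x lf -> derive_within a b g x lg ->
  derive_within a b (fun y => f y + g y) x (lf + lg).
Proof.
  rewrite !derive_within_limit. intros Hf Hg.
  eapply limit1_in_ext; [|exact (limit_plus _ _ _ _ _ _ Hf Hg)].
  intros y [_ Hy]. simpl. field. lra.
Qed.

Lemma derive_within_opp a b f x l :
  derive_within a b f x l -> derive_within a b (fun y => - f y) x (- l).
Proof.
  rewrite !derive_within_limit. intros Hf.
  eapply limit1_in_ext; [|exact (limit_Ropp _ _ _ _ Hf)].
  intros y [_ Hy]. simpl. field. lra.
Qed.

Lemma derive_within_minus a b f g x lf lg :
  derive_within a b f x lf -> derive_within a b g x lg ->
  derive_within a b (fun y => f y - g y) x (lf - lg).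
Proof.
  intros Hf Hg. exact (derive_within_plus _ _ _ _ _ _ _ Hf (derive_within_opp _ _ _ _ _ Hg)).
Qed.

Lemma derive_within_mult a b f g x lf lg :
  derive_within a b f x lf -> derive_within a b g x lg ->
  derive_within a b (fun y => f y * g y) x (lf * g x + f x * lg).
Proof.
  intros Hf Hg. pose proof (derive_within_continuous _ _ _ _ _ Hg) as Cg.
  rewrite derive_within_limit in *.
  eapply limit1_in_ext; [|exact (limit_plus _ _ _ _ _ _ (limit_mul _ _ _ _ _ _ Hf Cg)
     (limit_mul _ _ _ _ _ _ (limit1_in_const (f x) _ x) Hg))].
  intros y [_ Hy]. simpl. field. lra.
Qed.

Lemma derive_within_scal a b c f x l :
  derive_within a b f x l -> derive_within a b (fun y => c * f y) x (c * l).
Proof.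
  intros Hf. eapply derive_within_ext;
    [exact (derive_within_mult _ _ _ _ _ _ _ (derive_within_const a b c x) Hf)| |];
    intros; simpl; ring.
Qed.

Lemma derive_within_inv a b g x l :
  (forall y, a <= y <= b -> g y <> 0) -> g x <> 0 -> derive_within a b g x l ->
  derive_within a b (fun y => / g y) x (- l / (g x * g x)).
Proof.
  intros Hne Hgx Hg. pose proof (derive_within_continuous _ _ _ _ _ Hg) as Cg.
  pose proof (limit_inv _ _ _ _ Cg Hgx) as Ci.
  replace (- l / (g x * g x)) with (- l * / g x * / g x) by (field; auto).
  rewrite derive_within_limit in *.
  eapply limit1_in_ext; [|exact (limit_mul _ _ _ _ _ _
     (limit_mul _ _ _ _ _ _ (limit_Ropp _ _ _ _ Hg) Ci) (limit1_in_const (/ g x) _ x))].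
  intros y [Hy Hyx]. simpl. assert (g y <> 0) by auto. field. repeat split; auto; lra.
Qed.

Lemma derive_within_pow a b g x l k :
  derive_within a b g x l -> derive_within a b (fun y => g y ^ S k) x (INR (S k) * g x ^ k * l).
Proof.
  intros Hg. induction k as [|k IH].
  - eapply derive_within_ext; [exact Hg| |]; intros; simpl; ring.
  - eapply derive_within_ext; [exact (derive_within_mult _ _ _ _ _ _ _ Hg IH)| |].
    + intros; simpl; ring.
    + rewrite (S_INR (S k)). simpl. ring.
Qed.

Definition clamp (c d y : R) : R := Rmax c (Rmin d y).

Lemma clamp_id c d y : c <= y <= d -> clamp c d y = y.
Proof. intros; unfold clamp, Rmax, Rmin; repeat destruct Rle_dec; lra. Qed.

Lemma clamp_contract c d x y : c <= x <= d ->
  c <= clamp c d y <= d /\ Rabs (clamp c d y - x) <= Rabs (y - x).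
Proof.
  intros Hx. unfold clamp, Rmax, Rmin; repeat destruct Rle_dec; split; try lra;
    unfold Rabs; repeat destruct Rcase_abs; lra.
Qed.

(* Composing with [clamp c d] turns one-sided information on [c,d] into the
   two-sided notions of the standard library. *)
Lemma derive_within_continuity_pt_clamp c d g x l : c <= x <= d ->
  derive_within c d g x l -> continuity_pt (fun y => g (clamp c d y)) x.
Proof.
  intros Hx H. pose proof (derive_within_continuous _ _ _ _ _ H) as C.
  unfold continuity_pt, continue_in, limit1_in, limit_in in *. simpl in *. unfold Rdist in *.
  intros eps Heps. destruct (C eps Heps) as [al [Hal Hlim]]. exists al; split; auto.
  intros y [_ Hy]. rewrite (clamp_id c d x) by lra.
  destruct (clamp_contract c d x y Hx) as [Hc Hb].
  destruct (Req_dec (clamp c d y) x) as [E|E].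
  - rewrite E, Rminus_diag, Rabs_R0; lra.
  - apply Hlim. split; [split|]; auto; lra.
Qed.

Lemma derive_within_derivable_pt_lim_clamp c d g x l : c < x < d ->
  derive_within c d g x l -> derivable_pt_lim (fun y => g (clamp c d y)) x l.
Proof.
  intros Hx H eps Heps. destruct (H eps Heps) as [del [Hdel Hlim]].
  assert (P : 0 < Rmin del (Rmin (x - c) (d - x))) by (repeat apply Rmin_pos; lra).
  exists (mkposreal _ P). intros h Hh Hl. simpl in Hl.
  pose proof (Rmin_l del (Rmin (x - c) (d - x))).
  pose proof (Rmin_r del (Rmin (x - c) (d - x))).
  pose proof (Rmin_l (x - c) (d - x)). pose proof (Rmin_r (x - c) (d - x)).
  assert (Hxh : c <= x + h <= d) by (unfold Rabs in Hl; destruct Rcase_abs; lra).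
  rewrite (clamp_id c d x), (clamp_id c d (x + h)) by lra.
  replace h with (x + h - x) at 2 by ring. apply Hlim; auto.
  replace (x + h - x) with h by ring. split; [apply Rabs_pos_lt; auto|lra].
Qed.

Lemma rolle_within c d g g' : c < d ->
  (forall x, c <= x <= d -> derive_within c d g x (g' x)) -> g c = g d ->
  exists xi, c < xi < d /\ g' xi = 0.
Proof.
  intros Hcd Hder Heq. set (psi := fun y => g (clamp c d y)).
  assert (Hpsi : forall x, c < x < d -> derivable_pt_lim psi x (g' x)).
  { intros x Hx. apply derive_within_derivable_pt_lim_clamp; auto. apply Hder; lra. }
  assert (pr : forall x, c < x < d -> derivable_pt psi x) by (intros x Hx; exists (g' x); exact (Hpsi x Hx)).
  assert (Hc : forall x, c <= x <= d -> continuity_pt psi x).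
  { intros x Hx. eapply derive_within_continuity_pt_clamp; eauto. }
  assert (E : psi c = psi d) by (unfold psi; rewrite !clamp_id by lra; auto).
  destruct (Rolle psi c d pr Hc Hcd E) as [xi [P Hxi]].
  exists xi; split; auto. rewrite <- Hxi. unfold derive_pt. destruct (pr xi P) as [l Hl].
  simpl. eapply uniqueness_limite; [apply Hpsi|]; eauto.
Qed.

Lemma mvt_within a b g g' c d : a <= c -> c < d -> d <= b ->
  (forall x, a <= x <= b -> derive_within a b g x (g' x)) ->
  exists xi, c < xi < d /\ g d - g c = g' xi * (d - c).
Proof.
  intros Hac Hcd Hdb Hder. set (k := (g d - g c) / (d - c)).
  destruct (rolle_within c d (fun y => g y - k * y) (fun y => g' y - k)) as [xi [Hxi E]]; auto.
  - intros x Hx. eapply derive_within_ext.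
    + apply derive_within_minus; [|apply derive_within_scal, derive_within_id].
      apply (derive_within_restrict a b); [lra|lra|]. apply Hder; lra.
    + reflexivity.
    + ring.
  - unfold k. field. lra.
  - exists xi; split; auto. replace (g' xi) with k by lra. unfold k. field. lra.
Qed.

Lemma derive_within_zero_const a b g :
  (forall x, a <= x <= b -> derive_within a b g x 0) ->
  forall x, a <= x <= b -> g x = g a.
Proof.
  intros Hder x Hx. destruct (Req_dec x a) as [->|Hxa]; auto.
  destruct (mvt_within a b g (fun _ => 0) a x) as [xi [_ E]]; try lra; auto.
Qed.

Lemma ivt_within c d g t : c < d ->
  (forall x, c <= x <= d -> exists l, derive_within c d g x l) ->
  g c < t < g d -> exists z, c < z < d /\ g z = t.
Proof.
  intros Hcd Hder Ht.
  destruct (IVT_interv (fun y => g (clamp c d y) - t) c d) as [z [Hz E]]; auto.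
  - intros x Hx. destruct (Hder x Hx) as [l Hl].
    apply (derive_within_continuity_pt_clamp c d (fun y => g y - t) x (l - 0)); auto.
    apply derive_within_minus; [exact Hl|apply derive_within_const].
  - rewrite clamp_id; lra.
  - rewrite clamp_id; lra.
  - rewrite clamp_id in E by lra. exists z; split; [|lra].
    destruct Hz as [[Hz1| <-] [Hz2| ->]]; lra.
Qed.

Lemma INR_fact_S m : INR (fact (S m)) = INR (S m) * INR (fact m).
Proof. rewrite fact_simpl, mult_INR. reflexivity. Qed.

Lemma taylor_poly_center_eval g m x0 : taylor_poly g m x0 x0 = g 0%nat x0.
Proof.
  unfold taylor_poly. induction m as [|m IH]; simpl.
  - field.
  - rewrite IH. replace (x0 - x0) with 0 by ring. ring.
Qed.

Lemma derive_within_monomial a b c x0 k x :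
  derive_within a b (fun y => c * (y - x0) ^ S k) x (c * (INR (S k) * (x - x0) ^ k)).
Proof.
  apply derive_within_scal. eapply derive_within_ext;
    [apply derive_within_pow, derive_within_minus; [apply derive_within_id|apply derive_within_const]
    |reflexivity|cbv beta; ring].
Qed.

Lemma derive_within_taylor_poly a b g N x0 x :
  derive_within a b (taylor_poly g (S N) x0) x (taylor_poly (fun k => g (S k)) N x0 x).
Proof.
  induction N as [|N IH].
  - eapply derive_within_ext.
    + exact (derive_within_plus _ _ _ _ _ _ _ (derive_within_const a b (g 0%nat x0 / 1) x)
               (derive_within_monomial a b (g 1%nat x0 / 1) x0 0 x)).
    + intros y. unfold taylor_poly. simpl. ring.
    + unfold taylor_poly. simpl. field.
  - eapply derive_within_ext.
    + exact (derive_within_plus _ _ _ _ _ _ _ IH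
               (derive_within_monomial a b (g (S (S N)) x0 / INR (fact (S (S N)))) x0 (S N) x)).
    + reflexivity.
    + unfold taylor_poly. cbn [sum_f_R0]. rewrite (INR_fact_S (S N)). field.
      nonzero.
Qed.

Lemma derive_within_taylor_poly_center a b g m x0 x :
  (forall k, (k <= m)%nat -> derive_within a b (g k) x (g (S k) x)) ->
  derive_within a b (fun y => taylor_poly g m y x0) x (g (S m) x / INR (fact m) * (x0 - x) ^ m).
Proof.
  induction m as [|m IH]; intros Hder.
  - eapply derive_within_ext; [apply (derive_within_scal _ _ (/ 1)), (Hder 0%nat); lia| |].
    + intros y. unfold taylor_poly. simpl. field.
    + simpl. field.
  - assert (Hterm := derive_within_mult _ _ _ _ _ _ _
      (derive_within_scal _ _ (/ INR (fact (S m))) _ _ _ (Hder (S m) ltac:(lia)))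
      (derive_within_pow _ _ _ _ _ m
         (derive_within_minus _ _ _ _ _ _ _ (derive_within_const a b x0 x) (derive_within_id a b x)))).
    eapply derive_within_ext; [exact (derive_within_plus _ _ _ _ _ _ _
                                        (IH (fun k Hk => Hder k ltac:(lia))) Hterm)| |].
    + intros y. unfold taylor_poly. cbn [sum_f_R0]. field; nonzero.
    + rewrite INR_fact_S. simpl pow. field.
      nonzero.
Qed.

Lemma derive_within_zero_small a b g : g a = 0 -> derive_within a b g a 0 ->
  forall eps, 0 < eps -> exists del, 0 < del /\
    forall x, a < x <= b -> x - a < del -> Rabs (g x) <= eps * (x - a).
Proof.
  intros Hga Hder eps Heps. destruct (Hder eps Heps) as [del [Hdel Hq]].
  exists del; split; auto. intros x Hx Hxd.
  specialize (Hq x ltac:(lra)). rewrite Rabs_pos_eq in Hq by lra.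
  specialize (Hq ltac:(lra)). rewrite Hga, !Rminus_0_r in Hq.
  replace (g x) with (g x / (x - a) * (x - a)) by (field; lra).
  rewrite Rabs_mult, (Rabs_pos_eq (x - a)) by lra.
  apply Rmult_le_compat_r; lra.
Qed.

Lemma mvt_bound a b g g' M k x : a < x <= b ->
  (forall y, a <= y <= b -> derive_within a b g y (g' y)) -> g a = 0 ->
  (forall y, a < y < x -> Rabs (g' y) <= M * (y - a) ^ k) ->
  Rabs (g x) <= M * (x - a) ^ S k.
Proof.
  intros Hx Hder Hga Hbound.
  destruct (mvt_within a b g g' a x) as [xi [Hxi E]]; [lra|lra|lra|exact Hder|].
  rewrite Hga, Rminus_0_r in E. rewrite E, Rabs_mult, (Rabs_pos_eq (x - a)) by lra.
  specialize (Hbound xi Hxi). pose proof (Rabs_pos (g' xi)).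
  assert (Hpow : (xi - a) ^ k <= (x - a) ^ k) by (apply pow_incr; lra).
  assert (0 < (xi - a) ^ k) by (apply pow_lt; lra).
  assert (0 <= M) by nra.
  assert (Rabs (g' xi) <= M * (x - a) ^ k).
  { eapply Rle_trans; [exact Hbound|]. apply Rmult_le_compat_l; auto. }
  replace (M * (x - a) ^ S k) with (M * (x - a) ^ k * (x - a)) by (simpl; ring).
  apply Rmult_le_compat_r; lra.
Qed.

Lemma peano_bound a b g m : a <= b -> (1 <= m)%nat ->
  (forall j, (j < m)%nat -> forall x, a <= x <= b -> derive_within a b (g j) x (g (S j) x)) ->
  (forall j, (j <= m)%nat -> g j a = 0) ->
  forall eps, 0 < eps -> exists del, 0 < del /\ forall x, a < x <= b -> x - a < del ->
    forall j, (j < m)%nat -> Rabs (g j x) <= eps * (x - a) ^ (m - j).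
Proof.
  intros Hab. revert g. induction m as [|m IH]; intros g Hm Hder Hzero eps Heps; [lia|].
  destruct (Nat.eq_dec m 0) as [->|Hm0].
  - destruct (derive_within_zero_small a b (g 0%nat)) with eps as [del [Hdel Hsmall]]; auto.
    { rewrite <- (Hzero 1%nat) by lia. apply Hder; lia || lra. }
    exists del; split; auto. intros x Hx Hxd j Hj.
    replace j with 0%nat by lia. simpl. rewrite Rmult_1_r. auto.
  - destruct (IH (fun j => g (S j))) with eps as [del [Hdel Hsmall]]; auto; try lia.
    { intros j Hj x Hx. apply Hder; auto; lia. }
    { intros j Hj. apply Hzero. lia. }
    exists del; split; auto. intros x Hx Hxd [|j] Hj.
    + rewrite Nat.sub_0_r. apply (mvt_bound a b (g 0%nat) (g 1%nat)).
      * exact Hx.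
      * intros y Hy. apply Hder; auto; lia.
      * apply Hzero; lia.
      * intros y Hy. rewrite <- (Nat.sub_0_r m). apply (Hsmall y); lra || lia.
    + apply (Hsmall x Hx Hxd j). lia.
Qed.

Lemma taylor_poly_center_bound g m a x M : a <= x ->
  (forall k, (k <= m)%nat -> Rabs (g k x) <= M * (x - a) ^ (S m - k)) ->
  Rabs (taylor_poly g m x a) <= INR (S m) * M * (x - a) ^ S m.
Proof.
  intros Hx Hbound. unfold taylor_poly.
  eapply Rle_trans; [apply sum_f_R0_triangle|].
  eapply Rle_trans; [apply sum_Rle with (Bn := fun _ => M * (x - a) ^ S m)|].
  - intros k Hk. cbv beta.
    rewrite Rabs_mult, <- RPow_abs, Rabs_minus_sym, (Rabs_pos_eq (x - a)) by lra.
    unfold Rdiv. rewrite Rabs_mult, Rabs_inv, (Rabs_pos_eq (INR (fact k))) by apply pos_INR.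
    replace (S m) with (S m - k + k)%nat by lia. rewrite pow_add.
    pose proof (INR_fact_lt_0 k). pose proof (Rabs_pos (g k x)).
    assert (1 <= INR (fact k)) by (apply (le_INR 1), lt_O_fact).
    assert (0 <= (x - a) ^ k) by (apply pow_le; lra).
    specialize (Hbound k Hk).
    assert (Rabs (g k x) * / INR (fact k) <= Rabs (g k x)).
    { rewrite <- (Rmult_1_r (Rabs (g k x))) at 2. apply Rmult_le_compat_l; [lra|].
      rewrite <- Rinv_1. apply Rinv_le_contravar; lra. }
    nra.
  - rewrite sum_cte. right. ring.
Qed.

Lemma limit1_in_of_pow_bound a b phi n :
  (forall eps, 0 < eps -> exists del, 0 < del /\
     forall x, a < x <= b -> x - a < del -> Rabs (phi x) <= eps * (x - a) ^ n) ->
  limit1_in (fun x => phi x / (x - a) ^ n) (fun x => a < x <= b) 0 a.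
Proof.
  intros Hbound eps Heps. destruct (Hbound (eps / 2)) as [del [Hdel Hphi]]; [lra|].
  exists del; split; [lra|]. intros x [Hx Hxd]. simpl in *. unfold Rdist in *.
  rewrite Rabs_pos_eq in Hxd by lra. specialize (Hphi x Hx Hxd).
  assert (Hpow : 0 < (x - a) ^ n) by (apply pow_lt; lra).
  rewrite Rminus_0_r. unfold Rdiv.
  rewrite Rabs_mult, Rabs_inv, (Rabs_pos_eq ((x - a) ^ n)) by lra.
  apply (Rmult_lt_reg_r ((x - a) ^ n)); [lra|].
  rewrite Rmult_assoc, Rinv_l by lra. nra.
Qed.

(* [taylor_remainders D n a k] is the difference between the k-th derivative of
   the function and the k-th derivative of its degree-n Taylor polynomial at [a]. *)
Definition taylor_remainders (D : nat -> R -> R) (n : nat) (a : R) (k : nat) (y : R) : R :=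
  D k y - taylor_poly (fun j => D (k + j)%nat) (n - k) a y.

Lemma derive_within_taylor_remainders a b D n k x : (k < n)%nat ->
  derive_within a b (D k) x (D (S k) x) ->
  derive_within a b (taylor_remainders D n a k) x (taylor_remainders D n a (S k) x).
Proof.
  intros Hk Hder. apply derive_within_minus; [exact Hder|].
  replace (n - k)%nat with (S (n - S k)) by lia.
  eapply derive_within_ext; [apply derive_within_taylor_poly|reflexivity|].
  unfold taylor_poly. apply sum_eq. intros i _. rewrite Nat.add_succ_r. reflexivity.
Qed.

Lemma taylor_remainders_center D n a k : taylor_remainders D n a k a = 0.
Proof.
  unfold taylor_remainders. rewrite taylor_poly_center_eval, Nat.add_0_r. ring.
Qed.

Lemma taylor_poly_moving_center_remainders a b D m :
  (forall k, (k <= m)%nat -> forall x, a <= x <= b -> derive_within a b (D k) x (D (S k) x)) ->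
  forall x, a <= x <= b ->
  taylor_poly D m x a + D (S m) a * (a - x) ^ S m / INR (fact (S m)) - D 0%nat a
  = taylor_poly (taylor_remainders D (S m) a) m x a.
Proof.
  intros Hder.
  set (gap := fun y => taylor_poly D m y a + D (S m) a / INR (fact (S m)) * (a - y) ^ S m
                       - D 0%nat a - taylor_poly (taylor_remainders D (S m) a) m y a).
  assert (Hgap : forall x, a <= x <= b -> derive_within a b gap x 0).
  { intros x Hx. unfold gap. eapply derive_within_ext; [|intros y; reflexivity|].
    - apply derive_within_minus; [apply derive_within_minus; [apply derive_within_plus|]|].
      + apply derive_within_taylor_poly_center. intros k Hk. apply Hder; auto.
      + apply derive_within_scal, derive_within_pow, derive_within_minus;
          [apply derive_within_const|apply derive_within_id].
      + apply derive_within_const.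
      + apply derive_within_taylor_poly_center. intros k Hk.
        apply derive_within_taylor_remainders; [lia|]. apply Hder; auto; lia.
    - unfold taylor_remainders, taylor_poly. rewrite Nat.sub_diag. simpl sum_f_R0.
      rewrite INR_fact_S, Nat.add_0_r. simpl pow. field; nonzero. }
  intros x Hx. pose proof (derive_within_zero_const a b gap Hgap x Hx) as E.
  unfold gap in E. unfold Rdiv. rewrite !taylor_poly_center_eval, taylor_remainders_center in E.
  replace (a - a) with 0 in E by ring. rewrite pow_i in E by lia. lra.
Qed.

Lemma taylor_moving_center_peano a b D m : a < b ->
  (forall k, (k <= m)%nat -> forall x, a <= x <= b -> derive_within a b (D k) x (D (S k) x)) ->
  limit1_in (fun x => (taylor_poly D m x a + D (S m) a * (a - x) ^ S m / INR (fact (S m))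
                       - D 0%nat a) / (x - a) ^ S m)
            (fun x => a < x <= b) 0 a.
Proof.
  intros Hab Hder. apply (limit1_in_of_pow_bound _ _ (fun x => _ - _)).
  intros eps Heps.
  assert (HSm : 0 < INR (S m)) by (apply lt_0_INR; lia).
  destruct (peano_bound a b (taylor_remainders D (S m) a) (S m)) with (eps / INR (S m))
    as [del [Hdel Hrem]]; try lia; try lra.
  - intros j Hj x Hx. apply derive_within_taylor_remainders; auto. apply Hder; auto; lia.
  - intros j _. apply taylor_remainders_center.
  - apply Rdiv_lt_0_compat; lra.
  - exists del; split; auto. intros x Hx Hxd.
    rewrite (taylor_poly_moving_center_remainders a b) by (auto; lra).
    replace eps with (INR (S m) * (eps / INR (S m))) by (field; lra).
    apply taylor_poly_center_bound; [lra|]. intros k Hk. apply Hrem; auto; lia.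
Qed.

Lemma derive_within_pos_left c d g l : c < d -> derive_within c d g d l -> 0 < l ->
  exists p, c < p < d /\ g p < g d.
Proof.
  intros Hcd H Hl. destruct (H l Hl) as [del [Hdel Hq]].
  pose proof (Rmin_l del (d - c)). pose proof (Rmin_r del (d - c)).
  set (w := Rmin del (d - c)) in *.
  assert (Hw : 0 < w) by (apply Rmin_pos; lra).
  exists (d - w / 2). split; [lra|].
  specialize (Hq (d - w / 2)).
  rewrite Rabs_left in Hq by lra. specialize (Hq ltac:(lra) ltac:(lra)).
  apply Rabs_def2 in Hq. destruct Hq as [_ Hq].
  assert (Hslope : 0 < (g (d - w / 2) - g d) / (d - w / 2 - d)) by lra.
  assert (E : g (d - w / 2) - g d
              = (g (d - w / 2) - g d) / (d - w / 2 - d) * (d - w / 2 - d)) by (field; lra).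
  nra.
Qed.

Lemma critical_point_of_interior_min c d g g' p : c < p < d ->
  (forall x, c <= x <= d -> derive_within c d g x (g' x)) ->
  g p < g c -> g p < g d -> exists xi, c < xi < d /\ g' xi = 0.
Proof.
  intros Hp Hder Hc Hd.
  assert (Hsub : forall c' d', c <= c' -> d' <= d ->
            forall x, c' <= x <= d' -> derive_within c' d' g x (g' x)).
  { intros c' d' Hc' Hd' x Hx. apply (derive_within_restrict c d); [lra|lra|]. apply Hder; lra. }
  pose proof (Rmin_l (g c) (g d)). pose proof (Rmin_r (g c) (g d)).
  set (t := (g p + Rmin (g c) (g d)) / 2).
  assert (Hmin : g p < Rmin (g c) (g d)) by (apply Rmin_glb_lt; auto).
  destruct (ivt_within c p (fun y => - g y) (- t)) as [z1 [Hz1 E1]]; [lra| |unfold t; lra|].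
  { intros x Hx. exists (- g' x). apply derive_within_opp, Hsub; lra. }
  destruct (ivt_within p d g t) as [z2 [Hz2 E2]]; [lra| |unfold t; lra|].
  { intros x Hx. exists (g' x). apply Hsub; lra. }
  destruct (rolle_within z1 z2 g g') as [xi [Hxi E]]; [lra| |lra|].
  { apply Hsub; lra. }
  exists xi; split; [lra|exact E].
Qed.

Lemma limit1_in_right_approach h a b L p eps :
  limit1_in h (fun x => a < x <= b) L a -> a < p <= b -> 0 < eps ->
  exists q, a < q < p /\ Rabs (h q - L) < eps.
Proof.
  intros Hlim Hp Heps. destruct (Hlim eps Heps) as [al [Hal Hq]].
  simpl in Hq. unfold Rdist in Hq.
  pose proof (Rmin_l al (p - a)). pose proof (Rmin_r al (p - a)).
  assert (0 < Rmin al (p - a)) by (apply Rmin_pos; lra).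
  exists (a + Rmin al (p - a) / 2). split; [lra|]. apply Hq.
  rewrite Rabs_pos_eq; lra.
Qed.

(* The point [p] just left of [b] where [g] is below [g b <= L] is an interior
   minimum between a point near [a] (where [g] is close to [L]) and [b]. *)
Lemma rolle_left_limit_pos a b g g' L : a < b ->
  (forall c x, a < c -> c <= x <= b -> derive_within c b g x (g' x)) ->
  limit1_in g (fun x => a < x <= b) L a -> g b <= L -> 0 < g' b ->
  exists xi, a < xi < b /\ g' xi = 0.
Proof.
  intros Hab Hder Hlim HL Hpos.
  destruct (derive_within_pos_left ((a + b) / 2) b g (g' b)) as [p [Hp Hgp]];
    [lra|apply Hder; lra|exact Hpos|].
  destruct (limit1_in_right_approach g a b L p (L - g p)) as [q [Hq Hgq]]; [exact Hlim|lra|lra|].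
  apply Rabs_def2 in Hgq.
  destruct (critical_point_of_interior_min q b g g' p) as [xi [Hxi E]]; [lra| |lra|lra|].
  { intros x Hx. apply Hder; lra. }
  exists xi; split; [lra|exact E].
Qed.

Lemma rolle_left_limit a b g g' L : a < b ->
  (forall c x, a < c -> c <= x <= b -> derive_within c b g x (g' x)) ->
  limit1_in g (fun x => a < x <= b) L a -> (g b - L) * g' b <= 0 ->
  exists xi, a < xi <= b /\ g' xi = 0.
Proof.
  intros Hab Hder Hlim Hsign.
  destruct (Rtotal_order (g' b) 0) as [Hneg|[Hzero|Hpos]].
  - destruct (rolle_left_limit_pos a b (fun x => - g x) (fun x => - g' x) (- L))
      as [xi [Hxi E]]; [lra| |exact (limit_Ropp _ _ _ _ Hlim)|nra|lra|].
    + intros c x Hc Hx. apply derive_within_opp, Hder; lra.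
    + exists xi; split; lra.
  - exists b; split; [lra|exact Hzero].
  - destruct (rolle_left_limit_pos a b g g' L) as [xi [Hxi E]]; auto; [nra|].
    exists xi; split; [lra|exact E].
Qed.

Lemma taylor_poly_moving_center_expand D m x a :
  taylor_poly D (S m) x a
  = D 0%nat x - (x - a) * sum_f_R0 (fun j => (-1) ^ (j + 2) / INR (fact (j + 1))
                                              * (x - a) ^ j * D (j + 1)%nat x) m.
Proof.
  transitivity (D 0%nat x + - (x - a) * sum_f_R0 (fun j => (-1) ^ (j + 2) / INR (fact (j + 1))
                                              * (x - a) ^ j * D (j + 1)%nat x) m); [|ring].
  rewrite scal_sum. unfold taylor_poly. rewrite decomp_sum by lia. simpl pred. f_equal.
  - simpl. field.
  - apply sum_eq. intros i _.
    replace (i + 2)%nat with (S (S i)) by lia. replace (i + 1)%nat with (S i) by lia.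
    replace (a - x) with (-1 * (x - a)) by ring. rewrite Rpow_mult_distr.
    simpl pow. field; nonzero.
Qed.

Definition taylor_quotient (D : nat -> R -> R) (m : nat) (a C x : R) : R :=
  (taylor_poly D m x a - C) / (x - a) ^ S m.

Definition taylor_quotient_derivative (D : nat -> R -> R) (m : nat) (a C x : R) : R :=
  - INR (S m) * (taylor_poly D (S m) x a - C) / (x - a) ^ S (S m).

Lemma derive_within_taylor_quotient a c b D m C x : a < c -> c <= x <= b ->
  (forall k, (k <= m)%nat -> derive_within c b (D k) x (D (S k) x)) ->
  derive_within c b (taylor_quotient D m a C) x (taylor_quotient_derivative D m a C x).
Proof.
  intros Hc Hx Hder.
  assert (Hpow : forall y, c <= y <= b -> (y - a) ^ S m <> 0) by (intros; apply pow_nonzero; lra).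
  eapply derive_within_ext; [apply derive_within_mult| |].
  - apply derive_within_minus; [apply derive_within_taylor_poly_center, Hder|apply derive_within_const].
  - apply derive_within_inv; [exact Hpow|apply Hpow; lra|].
    apply derive_within_pow, derive_within_minus; [apply derive_within_id|apply derive_within_const].
  - reflexivity.
  - unfold taylor_quotient_derivative, taylor_poly. cbn [sum_f_R0].
    rewrite INR_fact_S. simpl pow. field; nonzero.
Qed.

Lemma taylor_quotient_right_limit a b D m C : a < b -> D 0%nat a = C ->
  (forall k, (k <= m)%nat -> forall x, a <= x <= b -> derive_within a b (D k) x (D (S k) x)) ->
  limit1_in (taylor_quotient D m a C) (fun x => a < x <= b)
            (D (S m) a * (-1) ^ m / INR (fact (S m))) a.
Proof.
  intros Hab HC Hder. rewrite <- (Rplus_0_l (D (S m) a * _ / _)).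
  eapply limit1_in_ext; [|exact (limit_plus _ _ _ _ _ _ (taylor_moving_center_peano a b D m Hab Hder)
                                  (limit1_in_const _ _ a))].
  intros x Hx. unfold taylor_quotient. rewrite HC.
  replace (a - x) with (-1 * (x - a)) by ring. rewrite Rpow_mult_distr. simpl pow.
  field; nonzero.
Qed.

Lemma taylor_quotient_endpoint_sign a b D m C : a < b ->
  (D (S m) a * (a - b) ^ S m / INR (fact (S m)) + (taylor_poly D m b a - C)) *
  (D (S m) b * (a - b) ^ S m / INR (fact (S m)) + (taylor_poly D m b a - C)) >= 0 ->
  (taylor_quotient D m a C b - D (S m) a * (-1) ^ m / INR (fact (S m)))
  * taylor_quotient_derivative D m a C b <= 0.
Proof.
  intros Hab Hsign.
  set (L := D (S m) a * (-1) ^ m / INR (fact (S m))).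
  set (P := (b - a) ^ S m). set (Q := (b - a) ^ S (S m) / INR (S m)).
  assert (HPQ : 0 < P * Q).
  { apply Rmult_lt_0_compat; [apply pow_lt; lra|].
    apply Rdiv_lt_0_compat; [apply pow_lt|apply lt_0_INR]; lra || lia. }
  replace (D (S m) a * (a - b) ^ S m / INR (fact (S m)) + (taylor_poly D m b a - C))
    with (P * (taylor_quotient D m a C b - L)) in Hsign.
  2: { unfold P, L, taylor_quotient. replace (a - b) with (-1 * (b - a)) by ring.
       rewrite Rpow_mult_distr. simpl pow. field; nonzero. }
  replace (D (S m) b * (a - b) ^ S m / INR (fact (S m)) + (taylor_poly D m b a - C))
    with (- Q * taylor_quotient_derivative D m a C b) in Hsign.
  2: { unfold Q, taylor_quotient_derivative, taylor_poly. cbn [sum_f_R0]. field; nonzero. }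
  nra.
Qed.

Lemma mean_value_identity_of_critical D m a f eta : a < eta -> D 0%nat eta = f eta ->
  taylor_quotient_derivative D m a (f a) eta = 0 ->
  (f eta - f a) / (eta - a) =
  sum_f_R0 (fun j => (-1) ^ (j + 2) / INR (fact (j + 1)) * (eta - a) ^ j * D (j + 1)%nat eta) m.
Proof.
  intros Heta Hf Hcrit.
  assert (Hgap : taylor_poly D (S m) eta a - f a = 0).
  { replace (taylor_poly D (S m) eta a - f a)
      with (taylor_quotient_derivative D m a (f a) eta * ((eta - a) ^ S (S m) / - INR (S m))).
    - rewrite Hcrit. ring.
    - unfold taylor_quotient_derivative. field; nonzero. }
  rewrite taylor_poly_moving_center_expand, Hf in Hgap.
  apply (Rmult_eq_reg_r (eta - a)); [|lra]. field_simplify; lra.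
Qed.

Theorem mainTheorem14 (n : nat) (a b : R) (f : R -> R) (D : nat -> R -> R) :
  (1 <= n)%nat -> a < b ->
  nth_derivs_on a b n f D ->
  let Tf := taylor_poly D (n - 1) b a - f a in
  (D n a * (a - b) ^ n / INR (fact n) + Tf) *
  (D n b * (a - b) ^ n / INR (fact n) + Tf) >= 0 ->
  exists eta : R, a < eta <= b /\
    (f eta - f a) / (eta - a) =
    sum_f_R0 (fun j => (-1) ^ (j + 2) / INR (fact (j + 1))
                       * (eta - a) ^ j * D (j + 1)%nat eta) (n - 1).
Proof.
  intros Hn Hab [Hf Hder] Tf Hsign. unfold Tf in Hsign; clear Tf.
  destruct n as [|m]; [lia|]. rewrite Nat.sub_succ, Nat.sub_0_r in *.
  assert (Hder' : forall k, (k <= m)%nat -> forall x, a <= x <= b ->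
                    derive_within a b (D k) x (D (S k) x)) by (intros k Hk; apply Hder; lia).
  destruct (rolle_left_limit a b (taylor_quotient D m a (f a))
              (taylor_quotient_derivative D m a (f a)) (D (S m) a * (-1) ^ m / INR (fact (S m))))
    as [eta [Heta Hcrit]].
  - exact Hab.
  - intros c x Hc Hx. apply derive_within_taylor_quotient; [exact Hc|exact Hx|].
    intros k Hk. apply (derive_within_restrict a b); [lra|lra|]. apply Hder'; [exact Hk|lra].
  - apply taylor_quotient_right_limit; [exact Hab|apply Hf; lra|exact Hder'].
  - apply taylor_quotient_endpoint_sign; assumption.
  - exists eta. split; [exact Heta|].
    apply mean_value_identity_of_critical; [lra|apply Hf; lra|exact Hcrit].
Qed.
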